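(* Let $p,q,r,s\ge 0$ be integers with $3+p+q=3+r+s=:n$, and let $H$ be a dephased complex Hadamard matrix of order $n$ of the block form \[H=\begin{bmatrix}1&1&1&1^p&1^q\\ 1&a&b&x&y\\ 1&b&a&x&-y\\ (1^r)^T&z^T&z^T&A&B\\ (1^s)^T&w^T&-w^T&C&D\end{bmatrix},\] where $a,b\in\mathbb{C}$ have modulus $1$, $x\in\mathbb{C}^p$, $y\in\mathbb{C}^q$, $z\in\mathbb{C}^r$, $w\in\mathbb{C}^s$ are row vectors, and $A,B,C,D$ are complex matrices of sizes $r\times p$, $r\times q$, $s\times p$, $s\times q$. For a complex number $\alpha$ of modulus $1$, let $H(\alpha)$ be the matrix obtained from $H$ by replacing $y$ by $\alpha y$ (so $-y$ becomes $-\alpha y$) and $w$ by $\overline{\alpha}w$ (so $-w$ becomes $-\overline{\alpha}w$). Then $H(\alpha)$ is a complex Hadamard matrix for every unimodular $\alpha$. If moreover $b=a$, then for all unimodular $\alpha,\gamma$ the matrix obtained from $H$ by replacing $y$ by $\alpha y$ and $w$ by $\gamma w$ is a complex Hadamard matrix.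
   Context: A complex Hadamard matrix of order $n$ is an $n\times n$ complex matrix with all entries of modulus $1$ satisfying $HH^\ast=nI_n$; it is dephased if its first row and first column consist of $1$'s. $1^k$ denotes the all-ones row vector of length $k$ and $^T$ denotes transpose. *)

(* complex numbers = arbitrary numClosedFieldType R. *)
From HB Require Import structures.
From mathcomp Require Import all_boot all_order all_algebra all_field.
Set Implicit Arguments. Unset Strict Implicit. Unset Printing Implicit Defensive.
Import Order.TTheory GRing.Theory Num.Theory.
Local Open Scope ring_scope.

Definition cHadamard (R : numClosedFieldType) (n : nat) (H : 'M[R]_n) : Prop :=
  (forall i j, `|H i j| = 1) /\ H *m (map_mx Num.conj H)^T = (n%:R)%:M.

(* The block matrix
   [ 1      1    1    1^p  1^q ]
   [ 1      a    b    x    y   ]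
   [ 1      b    a    x   -y   ]
   [ 1^r^T  z^T  z^T  A    B   ]
   [ 1^s^T  w^T -w^T  C    D   ]
   with row blocks of sizes 1,1,1,r,s and column blocks 1,1,1,p,q. *)
Definition Hblock (R : numClosedFieldType) (p q r s : nat) (a b : R) (x : 'rV[R]_p) (y : 'rV[R]_q)
  (z : 'rV[R]_r) (w : 'rV[R]_s) (A : 'M[R]_(r, p)) (B : 'M[R]_(r, q))
  (C : 'M[R]_(s, p)) (D : 'M[R]_(s, q))
  : 'M[R]_(1 + (1 + (1 + (r + s))), 1 + (1 + (1 + (p + q)))) :=
  col_mx (row_mx (const_mx 1) (row_mx (const_mx 1) (row_mx (const_mx 1)
            (row_mx (const_mx 1) (const_mx 1)))))
  (col_mx (row_mx (const_mx 1) (row_mx (const_mx a) (row_mx (const_mx b) (row_mx x y))))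
  (col_mx (row_mx (const_mx 1) (row_mx (const_mx b) (row_mx (const_mx a) (row_mx x (- y)))))
  (col_mx (row_mx (const_mx 1) (row_mx z^T (row_mx z^T (row_mx A B))))
          (row_mx (const_mx 1) (row_mx w^T (row_mx (- w^T) (row_mx C D))))))).

Lemma Hdim (p q r s : nat) (hrs : (3 + r + s = 3 + p + q)%N) :
  (1 + (1 + (1 + (r + s))) = 1 + (1 + (1 + (p + q))))%N.
Proof. by rewrite !addnA. Qed.

Definition Hmat (R : numClosedFieldType) (p q r s : nat) (hrs : (3 + r + s = 3 + p + q)%N) (a b : R)
  (x : 'rV[R]_p) (y : 'rV[R]_q) (z : 'rV[R]_r) (w : 'rV[R]_s)
  (A : 'M[R]_(r, p)) (B : 'M[R]_(r, q)) (C : 'M[R]_(s, p)) (D : 'M[R]_(s, q))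
  : 'M[R]_(1 + (1 + (1 + (p + q)))) :=
  castmx (Hdim hrs, erefl) (Hblock a b x y z w A B C D).

(* For a scalar t put h(t) = (1 + t) / 2 and let
     W(t) = [[h(t), h(-t)], [h(-t), h(t)]],
   the matrix acting as 1 on (1,1) and as t on (1,-1).  [eigmix k t] is the
   identity matrix of size 3 + k with W(t) inserted on the indices 1 and 2.
   We have W(t1) W(t2) = W(t1 t2), W(1) = 1, and W(t) is symmetric with
   conj W(t) = W(conj t); hence W(t) is unitary when |t| = 1.

   Mixing rows 1,2 of H by W(t1) and columns 1,2 by W(t2) gives again a
   matrix of the same shape: y becomes t1 y, w becomes t2 w, x, z, A, B, C, D
   are unchanged, and the corner entries a, b become
     twist a b (t1 t2) and twist b a (t1 t2),  twist a b t = h(t) a + h(-t) b.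
   These equal a, b whenever t1 t2 = 1 or b = a.  Since multiplying by
   unitary matrices preserves H H^* = n I, and unimodularity of the entries
   is plain, both claims follow: take (t1, t2) = (alpha, conj alpha) in general,
   and (t1, t2) = (alpha, gamma) when b = a. *)
From HB Require Import structures.
From mathcomp Require Import all_boot all_order all_algebra all_field.
From mathcomp Require Import ring.
Import Order.TTheory GRing.Theory Num.Theory.
Local Open Scope ring_scope.

Section HadamardDeformation.
Variable R : numClosedFieldType.
Local Open Scope sesquilinear_scope.
Implicit Types u v t a b c : R.

Definition mix (k : nat) u v : 'M[R]_(1 + (1 + (1 + k))) :=
  block_mx 1%:M 0 0
    (block_mx u%:M (row_mx v%:M 0) (col_mx v%:M 0) (block_mx u%:M 0 0 1%:M)).

Lemma mix_mul_col k n u v (X0 X1 X2 : 'M[R]_(1, n)) (Y : 'M[R]_(k, n)) :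
  mix k u v *m col_mx X0 (col_mx X1 (col_mx X2 Y)) =
  col_mx X0 (col_mx (u *: X1 + v *: X2) (col_mx (v *: X1 + u *: X2) Y)).
Proof.
rewrite /mix !mul_block_col !mul_row_col !mul_col_mx !mul_scalar_mx !mul0mx.
by rewrite !scale1r !add0r !addr0 add_col_mx !add0r.
Qed.

Lemma row_mul_mix k m u v (X0 X1 X2 : 'M[R]_(m, 1)) (Y : 'M[R]_(m, k)) :
  row_mx X0 (row_mx X1 (row_mx X2 Y)) *m mix k u v =
  row_mx X0 (row_mx (u *: X1 + v *: X2) (row_mx (v *: X1 + u *: X2) Y)).
Proof.
rewrite /mix !mul_row_block !mul_row_col !mul_mx_row !mul_mx_scalar !mulmx0.
by rewrite !scale1r !addr0 !add0r add_row_mx add0r.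
Qed.

Lemma mix10 k : mix k 1 0 = 1%:M.
Proof. by rewrite /mix !raddf0 row_mx0 col_mx0 -!scalar_mx_block. Qed.

Lemma mixM k u v u1 v1 :
  mix k u v *m mix k u1 v1 = mix k (u * u1 + v * v1) (u * v1 + v * u1).
Proof.
rewrite /mix !mulmx_block !mul_row_col !mul_col_row !mul_mx_row.
rewrite ?mul_row_block ?mul_block_col ?mul_col_mx ?mul_row_col.
rewrite ?mulmx0 ?mul0mx ?mulmx1 ?mul1mx -?scalar_mxM ?addr0 ?add0r.
rewrite !row_mx0 col_mx0 addr0 !add_row_mx add_col_mx add_block_mx.
by rewrite !addr0 !add0r -!raddfD /= [v * u1 + _]addrC [v * v1 + _]addrC.
Qed.

(* [mix] is symmetric, so its conjugate transpose just conjugates u and v. *)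
Lemma mix_tC k u v : (mix k u v)^t* = mix k u^* v^*.
Proof.
rewrite /mix !(tr_block_mx, tr_row_mx, tr_col_mx, tr_scalar_mx, trmx0).
by rewrite !(map_block_mx, map_row_mx, map_col_mx, map_scalar_mx, map_mx0) /= conjC1.
Qed.

Definition half t := (1 + t) / 2.

(* [eigmix k t] fixes e1 + e2 and multiplies e1 - e2 by t. *)
Definition eigmix k t := mix k (half t) (half (- t)).

Lemma half_sum t : half t + half (- t) = 1.
Proof. by rewrite /half; field. Qed.

Lemma half_diff t : half t - half (- t) = t.
Proof. by rewrite /half; field. Qed.

Lemma half1 : half 1 = 1.
Proof. by rewrite /half; field. Qed.

Lemma halfN1 : half (- 1) = 0.
Proof. by rewrite /half subrr mul0r. Qed.

Lemma half_mul_same t1 t2 :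
  half t1 * half t2 + half (- t1) * half (- t2) = half (t1 * t2).
Proof. by rewrite /half; field. Qed.

Lemma half_mul_opp t1 t2 :
  half t1 * half (- t2) + half (- t1) * half t2 = half (- (t1 * t2)).
Proof. by rewrite /half; field. Qed.

Lemma half_conj t : (half t)^* = half t^*.
Proof. by rewrite /half fmorph_div rmorph_nat rmorphD rmorph1. Qed.

Lemma eigmix1 k : eigmix k 1 = 1%:M.
Proof. by rewrite /eigmix half1 halfN1 mix10. Qed.

Lemma eigmixM k t1 t2 : eigmix k t1 *m eigmix k t2 = eigmix k (t1 * t2).
Proof. by rewrite /eigmix mixM half_mul_same half_mul_opp. Qed.

Lemma eigmix_tC k t : (eigmix k t)^t* = eigmix k t^*.
Proof. by rewrite /eigmix mix_tC !half_conj rmorphN. Qed.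

Lemma eigmix_unitary k t : `|t| = 1 -> eigmix k t \is unitarymx.
Proof.
move=> t_unit; apply/unitarymxP.
by rewrite eigmix_tC eigmixM -normCK t_unit expr1n eigmix1.
Qed.

(* The value produced in the corner block when W(t) mixes the pair (a, b). *)
Definition twist a b t := half t * a + half (- t) * b.

Lemma twist_twist a b t1 t2 :
  twist (twist a b t1) (twist b a t1) t2 = twist a b (t1 * t2).
Proof. by rewrite /twist /half; field. Qed.

Lemma twist_fixed a b t : t = 1 \/ b = a -> twist a b t = a /\ twist b a t = b.
Proof.
rewrite /twist; case=> [-> | ->].
  by rewrite half1 halfN1 !mul1r !mul0r !addr0.
by rewrite -mulrDl half_sum mul1r.
Qed.

Section HalfMixing.
Variables (m n : nat) (t : R) (X : 'M[R]_(m, n)).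

Lemma half_avg : half t *: X + half (- t) *: X = X.
Proof. by rewrite -scalerDl half_sum scale1r. Qed.

Lemma half_avgC : half (- t) *: X + half t *: X = X.
Proof. by rewrite addrC half_avg. Qed.

Lemma half_skew : half t *: X + half (- t) *: - X = t *: X.
Proof. by rewrite scalerN -scalerBl half_diff. Qed.

Lemma half_skewC : half (- t) *: X + half t *: - X = - (t *: X).
Proof. by rewrite scalerN -scalerBl -opprB half_diff scaleNr. Qed.

Lemma half_const a b :
  half t *: const_mx a + half (- t) *: const_mx b = const_mx (twist a b t) :> 'M_(m, n).
Proof. by apply/matrixP => i j; rewrite !mxE. Qed.

Lemma half_constC a b :
  half (- t) *: const_mx a + half t *: const_mx b = const_mx (twist b a t) :> 'M_(m, n).
Proof. by rewrite addrC half_const. Qed.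
End HalfMixing.

Section MixedBlocks.
Variables (p q r s : nat) (x : 'rV[R]_p) (y : 'rV[R]_q) (z : 'rV[R]_r) (w : 'rV[R]_s)
  (A : 'M[R]_(r, p)) (B : 'M[R]_(r, q)) (C : 'M[R]_(s, p)) (D : 'M[R]_(s, q)).

Lemma eigmix_mul_Hblock a b t :
  eigmix (r + s) t *m Hblock a b x y z w A B C D =
  Hblock (twist a b t) (twist b a t) x (t *: y) z w A B C D.
Proof.
rewrite /Hblock /eigmix mix_mul_col !scale_row_mx !add_row_mx.
by rewrite !half_avg !half_avgC !half_const !half_constC half_skew half_skewC.
Qed.

Lemma Hblock_mul_eigmix a b t :
  Hblock a b x y z w A B C D *m eigmix (p + q) t =
  Hblock (twist a b t) (twist b a t) x y z (t *: w) A B C D.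
Proof.
rewrite /Hblock /eigmix !mul_col_mx !row_mul_mix.
rewrite !half_avg !half_avgC !half_const !half_constC half_skew half_skewC.
by rewrite [(t *: w)^T]linearZ.
Qed.
End MixedBlocks.

Lemma eigmix_Hblock p q r s (x : 'rV[R]_p) (y : 'rV[R]_q) (z : 'rV[R]_r) (w : 'rV[R]_s)
  (A : 'M[R]_(r, p)) (B : 'M[R]_(r, q)) (C : 'M[R]_(s, p)) (D : 'M[R]_(s, q)) a b t1 t2 :
  eigmix (r + s) t1 *m Hblock a b x y z w A B C D *m eigmix (p + q) t2 =
  Hblock (twist a b (t1 * t2)) (twist b a (t1 * t2)) x (t1 *: y) z (t2 *: w) A B C D.
Proof. by rewrite eigmix_mul_Hblock Hblock_mul_eigmix !twist_twist. Qed.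

Lemma gram_unitary_mul m n c (P : 'M[R]_m) (M : 'M[R]_(m, n)) (Q : 'M[R]_n) :
  P \is unitarymx -> Q \is unitarymx -> M *m M^t* = c%:M ->
  (P *m M *m Q) *m (P *m M *m Q)^t* = c%:M.
Proof.
move=> uP uQ MM.
rewrite trmx_mul map_mxM mulmxA mulmxtVK // trmx_mul map_mxM mulmxA -(mulmxA P) MM.
by rewrite mul_mx_scalar -scalemxAl (unitarymxP uP) scalemx1.
Qed.

(* All entries have modulus 1; a boolean predicate so that the block
   decomposition lemmas below are plain rewrite rules. *)
Definition unimodular {m n} (M : 'M[R]_(m, n)) := [forall i, forall j, `|M i j| == 1].

Lemma unimodularP m n (M : 'M[R]_(m, n)) :
  reflect (forall i j, `|M i j| = 1) (unimodular M).
Proof.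
apply: (iffP forallP) => [uM i j | uM i]; first exact/eqP/(forallP (uM i)).
by apply/forallP => j; apply/eqP.
Qed.

Lemma unimodular_col m1 m2 n (M1 : 'M[R]_(m1, n)) (M2 : 'M[R]_(m2, n)) :
  unimodular (col_mx M1 M2) = unimodular M1 && unimodular M2.
Proof.
apply/unimodularP/andP => [uM | [/unimodularP uM1 /unimodularP uM2] i j].
  by split; apply/unimodularP => i j; [rewrite -(col_mxEu M1 M2) | rewrite -(col_mxEd M1 M2)].
by case: (split_ordP i) => k ->; rewrite ?col_mxEu ?col_mxEd.
Qed.

Lemma unimodular_row m n1 n2 (M1 : 'M[R]_(m, n1)) (M2 : 'M[R]_(m, n2)) :
  unimodular (row_mx M1 M2) = unimodular M1 && unimodular M2.
Proof.
apply/unimodularP/andP => [uM | [/unimodularP uM1 /unimodularP uM2] i j].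
  by split; apply/unimodularP => i j; [rewrite -(row_mxEl M1 M2) | rewrite -(row_mxEr M1 M2)].
by case: (split_ordP j) => k ->; rewrite ?row_mxEl ?row_mxEr.
Qed.

Lemma unimodularZ {m n} c (M : 'M[R]_(m, n)) :
  `|c| = 1 -> unimodular (c *: M) = unimodular M.
Proof.
move=> c_unit; apply: eq_forallb => i; apply: eq_forallb => j.
by rewrite mxE normrM c_unit mul1r.
Qed.

Lemma unimodularN m n (M : 'M[R]_(m, n)) : unimodular (- M) = unimodular M.
Proof. by apply: eq_forallb => i; apply: eq_forallb => j; rewrite mxE normrN. Qed.

Lemma unimodular_Hblock p q r s (x : 'rV[R]_p) (y : 'rV[R]_q) (z : 'rV[R]_r) (w : 'rV[R]_s)
  (A : 'M[R]_(r, p)) (B : 'M[R]_(r, q)) (C : 'M[R]_(s, p)) (D : 'M[R]_(s, q)) a b t1 t2 :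
  `|t1| = 1 -> `|t2| = 1 -> unimodular (Hblock a b x y z w A B C D) ->
  unimodular (Hblock a b x (t1 *: y) z (t2 *: w) A B C D).
Proof.
move=> t1_unit t2_unit; rewrite /Hblock [(t2 *: w)^T]linearZ !unimodular_col !unimodular_row.
by rewrite !unimodularN (unimodularZ _ _ t1_unit) (unimodularZ _ _ t2_unit).
Qed.

Lemma cHadamard_castP m n (e : m = n) (M : 'M[R]_(m, n)) :
  cHadamard (castmx (e, erefl n) M) <-> unimodular M /\ M *m M^t* = n%:R%:M.
Proof.
move: M; case: n / e => M; rewrite castmx_id /cHadamard map_trmx.
by split=> -[/unimodularP uM MM]; split.
Qed.

Lemma Hmat_deform p q r s (hrs : (3 + r + s = 3 + p + q)%N) a b
  (x : 'rV[R]_p) (y : 'rV[R]_q) (z : 'rV[R]_r) (w : 'rV[R]_s)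
  (A : 'M[R]_(r, p)) (B : 'M[R]_(r, q)) (C : 'M[R]_(s, p)) (D : 'M[R]_(s, q)) t1 t2 :
  `|t1| = 1 -> `|t2| = 1 -> t1 * t2 = 1 \/ b = a ->
  cHadamard (Hmat hrs a b x y z w A B C D) ->
  cHadamard (Hmat hrs a b x (t1 *: y) z (t2 *: w) A B C D).
Proof.
move=> t1_unit t2_unit /(twist_fixed a) [twist_a twist_b].
move=> /cHadamard_castP [uniH gramH]; apply/cHadamard_castP.
split; first exact: unimodular_Hblock.
have -> : Hblock a b x (t1 *: y) z (t2 *: w) A B C D =
    eigmix (r + s) t1 *m Hblock a b x y z w A B C D *m eigmix (p + q) t2.
  by rewrite eigmix_Hblock twist_a twist_b.
by apply: gram_unitary_mul; rewrite ?eigmix_unitary.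
Qed.
End HadamardDeformation.

Theorem theorem1 (R : numClosedFieldType) (p q r s : nat) (hrs : (3 + r + s = 3 + p + q)%N) (a b : R)
  (x : 'rV[R]_p) (y : 'rV[R]_q) (z : 'rV[R]_r) (w : 'rV[R]_s)
  (A : 'M[R]_(r, p)) (B : 'M[R]_(r, q)) (C : 'M[R]_(s, p)) (D : 'M[R]_(s, q)) :
  `|a| = 1 -> `|b| = 1 ->
  cHadamard (Hmat hrs a b x y z w A B C D) ->
  (forall alpha : R, `|alpha| = 1 ->
     cHadamard (Hmat hrs a b x (alpha *: y) z (alpha^* *: w) A B C D)) /\
  (b = a -> forall alpha gamma : R, `|alpha| = 1 -> `|gamma| = 1 ->
     cHadamard (Hmat hrs a b x (alpha *: y) z (gamma *: w) A B C D)).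
Proof.
move=> _ _ hadH; split=> [alpha alpha_unit | eq_ba alpha gamma alpha_unit gamma_unit].
  apply: Hmat_deform => //; first by rewrite norm_conjC.
  by left; rewrite -normCK alpha_unit expr1n.
by apply: Hmat_deform => //; right.
Qed.
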